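(* Let $A\in\mathbb{C}^{n\times n}$, $C\in\mathbb{C}^{1\times n}$, $s=\{s_1,\dots,s_j\}\subset\mathbb{C}\setminus\Lambda(A^* )$, and let $\mathcal{K}_j(A^*,C^*,s)$ be $A^*$-variant with basis $Z_j$ such that $A^*Z_j=C^*h_j+Z_jH_{-j}$ with $h_j\in\mathbb{C}^{1\times j}$, $H_{-j}\in\mathbb{C}^{j\times j}$ and $\Lambda(H_{-j})=s$. Then the pair $(h_j,H_{-j})$ is observable, i.e. there is no nonzero $u\in\mathbb{C}^j$ with $h_ju=0$ and $H_{-j}u=\mu u$ for some $\mu\in\mathbb{C}$. Consequently, for every $B\in\mathbb{C}^{n\times m}$ the pair $\big(H_{-j}^*,\begin{bmatrix}h_j^*&Z_j^*B\end{bmatrix}\big)$ is controllable.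
   Context: For $M\in\mathbb{C}^{n\times n}$, $b\in\mathbb{C}^n$ and a multiset $s=\{s_1,\dots,s_j\}\subset(\mathbb{C}\cup\{\infty\})\setminus\Lambda(M)$, with $q(x)=\prod_{i:\,s_i\ne\infty}(x-s_i)$, the rational Krylov subspace is $\mathcal{K}_j(M,b,s)=\{q(M)^{-1}p(M)b:p\in\Pi_{j-1}\}$. A subspace $\mathcal{V}$ is $M$-variant if $M\mathcal{V}\not\subseteq\mathcal{V}$. The matrix $\begin{bmatrix}C^*&Z_j\end{bmatrix}$ has full column rank. A pair $(F,G)$ with $F\in\mathbb{C}^{j\times j}$ is controllable if $\operatorname{rank}\begin{bmatrix}G&FG&\cdots&F^{j-1}G\end{bmatrix}=j$. *)

(* complex numbers modelled as R[i] for R : realType (= C). *)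
From HB Require Import structures.
From mathcomp Require Import all_boot all_algebra.
From mathcomp Require Import reals complex.
Set Implicit Arguments. Unset Strict Implicit. Unset Printing Implicit Defensive.
Import GRing.Theory Num.Theory.
Local Open Scope ring_scope.

Section Defs.
Variable K : numClosedFieldType.

Definition ctrans m n (M : 'M[K]_(m, n)) : 'M[K]_(n, m) := (map_mx Num.conj M)^T.

Definition peval n (p : {poly K}) (M : 'M[K]_n) : 'M[K]_n :=
  \sum_(i < size p) p`_i *: M ^+ i.

(* q(M) = prod_i (M - s_i I), all shifts finite *)
Definition qeval n j (s : 'I_j -> K) (M : 'M[K]_n) : 'M[K]_n :=
  \prod_(i < j) (M - (s i)%:M).

(* membership in the rational Krylov subspace K_j(M, b, s)
   = { q(M)^{-1} p(M) b : deg p <= j-1 } *)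
Definition in_ratKrylov n j (M : 'M[K]_n) (b : 'cV[K]_n) (s : 'I_j -> K)
    (v : 'cV[K]_n) : Prop :=
  exists p : {poly K}, (size p <= j)%N /\
    v = invmx (qeval s M) *m (peval p M *m b).

Definition is_basis n j (Z : 'M[K]_(n, j)) (V : 'cV[K]_n -> Prop) : Prop :=
  \rank Z = j /\ (forall v, V v <-> exists x : 'cV[K]_j, v = Z *m x).

Definition variant n (M : 'M[K]_n) (V : 'cV[K]_n -> Prop) : Prop :=
  exists v, V v /\ ~ V (M *m v).

Definition observable p j (h : 'M[K]_(p, j)) (H : 'M[K]_j) : Prop :=
  ~ exists (u : 'cV[K]_j) (mu : K), u != 0 /\ h *m u = 0 /\ H *m u = mu *: u.

Definition ctrb_mx j p (F : 'M[K]_j) (G : 'M[K]_(j, p)) :=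
  \mxrow_(i < j) (F ^+ i *m G).

Definition controllable j p (F : 'M[K]_j) (G : 'M[K]_(j, p)) : Prop :=
  \rank (ctrb_mx F G) = j.

End Defs.

From HB Require Import structures.
From mathcomp Require Import all_boot all_algebra.
From mathcomp Require Import reals complex.
Import GRing.Theory Num.Theory.
Local Open Scope ring_scope.
Set Implicit Arguments. Unset Strict Implicit.

(* 1. If Z has full column rank and M Z = c h + Z H, then an eigenvector u of
      H with h u = 0 is mapped by Z to an eigenvector Z u of M with the same
      eigenvalue.  Hence if no eigenvalue of H is an eigenvalue of M, the
      pair (h, H) is observable.  In the theorem the eigenvalues of H are the
      shifts s_k, which by hypothesis avoid the spectrum of A^*.
   2. Popov-Belevitch-Hautus test: (F, G) is controllable as soon as no left
      eigenvector of F is annihilated by G.  By Cayley-Hamilton the left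
      kernel of the controllability matrix is F-invariant; over an
      algebraically closed field a nonzero invariant subspace contains a left
      eigenvector, which is then killed by G.
   3. Conjugate transposition turns a left eigenvector w of H^* killed by h^*
      into a right eigenvector w^* of H killed by h, so observability of
      (h, H) gives controllability of (H^*, [h^* X]) for every block X. *)

Section KrylovControllability.
Variable K : numClosedFieldType.

Lemma ctransM m n p (A : 'M[K]_(m, n)) (B : 'M[K]_(n, p)) :
  ctrans (A *m B) = ctrans B *m ctrans A.
Proof. by rewrite /ctrans map_mxM trmx_mul. Qed.

Lemma ctransK m n (A : 'M[K]_(m, n)) : ctrans (ctrans A) = A.
Proof. by apply/matrixP=> i k; rewrite !mxE conjCK. Qed.

Lemma ctransZ m n a (A : 'M[K]_(m, n)) : ctrans (a *: A) = a^* *: ctrans A.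
Proof. by rewrite /ctrans map_mxZ linearZ. Qed.

Lemma ctrans0 m n : ctrans (0 : 'M[K]_(m, n)) = 0.
Proof. by apply/matrixP=> i k; rewrite !mxE conjC0. Qed.

Lemma ctrans_eq0 m n (A : 'M[K]_(m, n)) : (ctrans A == 0) = (A == 0).
Proof.
apply/eqP/eqP=> [A0|->]; last exact: ctrans0.
by rewrite -[A]ctransK A0 ctrans0.
Qed.

(* [eigenvalue] is phrased with left (row) eigenvectors; a right (column)
   eigenvector yields an eigenvalue as well, since det (M - mu) = 0. *)
Lemma eigenvalue_col n (M : 'M[K]_n) (v : 'cV[K]_n) mu :
  v != 0 -> M *m v = mu *: v -> eigenvalue M mu.
Proof.
move=> v0 Mv.
have /det0P [w w0 Mw] : \det (M - mu%:M) == 0.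
  rewrite -det_tr; apply/det0P; exists v^T; first by rewrite trmx_eq0.
  by rewrite -trmx_mul mulmxBl Mv mul_scalar_mx subrr trmx0.
apply/eigenvalueP; exists w => //.
by apply/eqP; rewrite -subr_eq0 -mul_mx_scalar -mulmxBr Mw.
Qed.

Lemma observable_of_projection n p j (M : 'M[K]_n) (c : 'M[K]_(n, p))
    (Z : 'M[K]_(n, j)) (h : 'M[K]_(p, j)) (H : 'M[K]_j) :
  \rank Z = j -> M *m Z = c *m h + Z *m H ->
  (forall mu, eigenvalue H mu -> ~~ eigenvalue M mu) ->
  observable h H.
Proof.
move=> rkZ MZ sep [u [mu [u0 [hu Hu]]]].
have Zu0 : Z *m u != 0.
  rewrite -trmx_eq0 trmx_mul mulmx_free_eq0 ?trmx_eq0 //.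
  by rewrite /row_free mxrank_tr rkZ.
have MZu : M *m (Z *m u) = mu *: (Z *m u).
  by rewrite mulmxA MZ mulmxDl -!mulmxA hu mulmx0 add0r Hu scalemxAr.
by have := sep mu (eigenvalue_col u0 Hu); rewrite (eigenvalue_col Zu0 MZu).
Qed.

Lemma char_poly_top_power n (F : 'M[K]_n.+1) :
  F ^+ n.+1 = - \sum_(i < n.+1) (char_poly F)`_i *: F ^+ i.
Proof.
have expand (q : {poly K}) : horner_mx F q = \sum_(i < size q) q`_i *: F ^+ i.
  rewrite -{1}[q]coefK poly_def rmorph_sum; apply: eq_bigr => i _.
  rewrite -mul_polyC rmorphM /= horner_mx_C rmorphXn /= horner_mx_X.
  by rewrite [_ * _]mul_scalar_mx.
have CH := Cayley_Hamilton F.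
rewrite expand size_char_poly big_ord_recr /= in CH.
have lead1 : (char_poly F)`_n.+1 = 1.
  by have /monicP := char_poly_monic F; rewrite lead_coefE size_char_poly.
rewrite lead1 scale1r in CH.
by apply/eqP; rewrite -addr_eq0 addrC CH.
Qed.

Lemma ctrb_mx_blocks m j p (F : 'M[K]_j) (G : 'M[K]_(j, p)) (w : 'M[K]_(m, j)) :
  w *m ctrb_mx F G = 0 -> forall i : 'I_j, w *m (F ^+ i *m G) = 0.
Proof.
rewrite /ctrb_mx mul_mxrow => wX0 i.
by have := congr1 (fun X => submxrow X i) wX0; rewrite mxrowK submxrow0.
Qed.

(* By Cayley-Hamilton, what annihilates the first j blocks annihilates all
   blocks F^k G, k arbitrary. *)
Lemma ctrb_mx_all_powers m j p (F : 'M[K]_j) (G : 'M[K]_(j, p))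
    (w : 'M[K]_(m, j)) :
  w *m ctrb_mx F G = 0 -> forall k, w *m (F ^+ k *m G) = 0.
Proof.
case: j F G w => [|j] F G w wX0 k; first by rewrite thinmx0 mul0mx.
elim/ltn_ind: k => k IH.
have [kj|jk] := ltnP k j.+1; first exact: (ctrb_mx_blocks wX0 (Ordinal kj)).
rewrite -(subnK jk) exprD char_poly_top_power mulrN mulr_sumr -mulmxE.
rewrite mulNmx mulmxN mulmx_suml mulmx_sumr big1 ?oppr0 // => i _.
rewrite -scalemxAr -scalemxAl -scalemxAr mulmxE -exprD.
by rewrite IH ?scaler0 // -{2}(subnK jk) ltn_add2l.
Qed.

Lemma ctrb_kernel_stable j p (F : 'M[K]_j) (G : 'M[K]_(j, p)) :
  (kermx (ctrb_mx F G) *m F <= kermx (ctrb_mx F G))%MS.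
Proof.
set W := kermx _; have W0 : W *m ctrb_mx F G = 0 by rewrite mulmx_ker.
rewrite sub_kermx /ctrb_mx mul_mxrow; apply/eqP.
rewrite -(mxrow0 (q_ := fun _ => p)); apply/eq_mxrowP => i.
have -> : W *m F *m (F ^+ i *m G) = W *m (F ^+ i.+1 *m G).
  by rewrite exprS mulmxA -(mulmxA W F) !mulmxA.
exact: ctrb_mx_all_powers.
Qed.

Lemma stable_left_eigenvector j (F W : 'M[K]_j) :
  (0 < \rank W)%N -> (W *m F <= W)%MS ->
  exists w : 'rV_j, exists b, [/\ w != 0, (w <= W)%MS & w *m F = b *: w].
Proof.
move=> W_gt0 WF.
have [a /eigenvalueP [v Hv v0]] := eigenvalue_closed (restrictmx W F) W_gt0.
set w := v *m row_base W.
have /sub_rVP [b Hb] : (w *m F <= w)%MS.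
  rewrite -stablemx_restrict //; apply/eigenvectorP; exists a.
  by apply/eigenspaceP.
exists w, b; split=> //; first by rewrite mulmx_free_eq0 ?row_base_free.
by apply: submx_trans (submxMl _ _) _; rewrite eq_row_base.
Qed.

Lemma controllable_PBH j p (F : 'M[K]_j) (G : 'M[K]_(j, p)) :
  (forall (w : 'rV_j) b, w != 0 -> w *m F = b *: w -> w *m G != 0) ->
  controllable F G.
Proof.
move=> PBH; apply/eqP; rewrite eqn_leq rank_leq_row /= leqNgt; apply/negP.
rewrite -subn_gt0 -mxrank_ker => ker_gt0.
have [w [b [w0 wW wF]]] := stable_left_eigenvector ker_gt0 (ctrb_kernel_stable F G).
case: j F G PBH w wW wF w0 ker_gt0 => [|j] F G PBH w wW wF w0.
  by rewrite thinmx0 eqxx in w0.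
move/sub_kermxP: wW => /ctrb_mx_blocks /(_ ord0); rewrite expr0 mul1mx => wG.
by move: (PBH w b w0 wF); rewrite wG eqxx.
Qed.

Lemma controllable_dual_of_observable p q j (h : 'M[K]_(p, j)) (H : 'M[K]_j)
    (X : 'M[K]_(j, q)) :
  observable h H -> controllable (ctrans H) (row_mx (ctrans h) X).
Proof.
move=> obs; apply: controllable_PBH => w b w0 wH; apply/negP => /eqP.
rewrite mul_mx_row => /eqP; rewrite row_mx_eq0 => /andP [/eqP wh _].
apply: obs; exists (ctrans w), b^*; split; first by rewrite ctrans_eq0.
split; first by rewrite -[h]ctransK -ctransM wh ctrans0.
by rewrite -[H]ctransK -ctransM wH ctransZ.
Qed.

End KrylovControllability.

Unset Implicit Arguments.
Set Strict Implicit.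

Theorem mainTheorem3 (R : realType) (n j : nat)
  (A : 'M[R[i]]_n) (C : 'M[R[i]]_(1, n)) (s : 'I_j -> R[i])
  (Z : 'M[R[i]]_(n, j)) (h : 'M[R[i]]_(1, j)) (H : 'M[R[i]]_j) :
  (forall k, ~~ eigenvalue (ctrans A) (s k)) ->
  variant (ctrans A) (in_ratKrylov (ctrans A) (ctrans C) s) ->
  is_basis Z (in_ratKrylov (ctrans A) (ctrans C) s) ->
  ctrans A *m Z = ctrans C *m h + Z *m H ->
  char_poly H = \prod_(k < j) ('X - (s k)%:P) ->
  observable h H /\
  (forall (m : nat) (B : 'M[R[i]]_(n, m)),
     controllable (ctrans H) (row_mx (ctrans h) (ctrans Z *m B))).
Proof.
move=> shifts_ok _ [rkZ _] AZ charH.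
(* Every eigenvalue of H is one of the shifts s_k. *)
have sep mu : eigenvalue H mu -> ~~ eigenvalue (ctrans A) mu.
  rewrite eigenvalue_root_char charH /root horner_prod.
  move/prodf_eq0 => [k _]; rewrite hornerXsubC subr_eq0 => /eqP ->.
  exact: shifts_ok.
have obs : observable h H by apply: observable_of_projection rkZ AZ sep.
by split=> // m B; apply: controllable_dual_of_observable.
Qed.
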